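(* Let $\llbracket\cdot\rrbracket$ be an interpretation of types, let $\rho$ be a type and $i\le i'$ in $I_\rho$. (1) If $\rho\in\mathrm{Type}^+$, then the factor system $(\llbracket\rho\rrbracket_i)_{i\in I_\rho}$ is direct, and for all $a\in\llbracket\rho\rrbracket$, $a_i\in\llbracket\rho\rrbracket_i$: $a\triangleright a_i$ implies $a\triangleright emb_{i,i'}(a_i)$. (2) If $\rho\in\mathrm{Type}^-$, then the factor system $(\llbracket\rho\rrbracket_i)_{i\in I_\rho}$ is inverse, and for all $a\in\llbracket\rho\rrbracket$, $a_{i'}\in\llbracket\rho\rrbracket_{i'}$: $a\triangleright a_{i'}$ implies $a\triangleright proj_{i',i}(a_{i'})$.
   Context: Systems and factor systems: for a non-empty directed preordered set $I$, a system consists of pairwise disjoint sets $M_i$ ($i\in I$) and relations $\triangleright\subseteq M_{i'}\times M_i$ ($i\le i'$), reflexive for $i=i'$; $a_i\approx b_j$ iff some $c\in M_{i'}$, $i'\ge i,j$, has $c\triangleright a_i,c\triangleright b_j$; prefactor system: $a_{i'}\approx a_i\iff a_{i'}\triangleright a_i$. A factor system is a prefactor system with $\approx$-preserving $emb_{i,i'}:M_i\to M_{i'}$, $proj_{i',i}:M_{i'}\to M_i$ with $emb_{i,i}(a)\approx a$, $proj_{i,i}(a)\approx a$, $emb_{i',i''}\circ emb_{i,i'}(a)\approx emb_{i,i''}(a)$, $proj_{i',i}\circ proj_{i'',i'}(a)\approx proj_{i'',i}(a)$, $proj_{i',i}(emb_{i,i'}(a))\approx a$, and $a_{i'}\triangleright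 a_i\Rightarrow emb_{i',i''}(a_{i'})\triangleright a_i$, $a_{i''}\triangleright a_i\Rightarrow proj_{i'',i'}(a_{i''})\triangleright a_i$ ($i\le i'\le i''$). It is direct iff $a_{i'}\triangleright a_i\iff a_{i'}\approx emb_{i,i'}(a_i)$, inverse iff $a_{i'}\triangleright a_i\iff proj_{i',i}(a_{i'})\approx a_i$. Filters: for each such $I$ a family $\mathcal F(I)$ of cofinal subsets, closed under supersets and finite intersections, containing all non-empty up-sets; standing Condition (D): $H\in\mathcal F(I\times J)$, $I'\in\mathcal F(I)$ imply $\{j\mid\exists i\in I',(i,j)\in H\}\in\mathcal F(J)$. A target for $M_I$: a set $M$ with relation $a\triangleright a_i$ such that $\{i\mid\exists a_i,a\triangleright a_i\}\in\mathcal F(I)$ and $a\triangleright a_{i'},a\triangleright a_i\Rightarrow a_{i'}\triangleright a_i$; a limit is a target $M$ such that for every target $N$ there is a unique $\Phi:N\to M$ with $b\triangleright a_i\Rightarrow\Phi(b)\triangleright a_i$. Function space of factor systems $[M_I\to N_J]$: indices $i\to j\in I\times J$, states = $\approx$-preserving functions $M_i\to N_j$, $f'\triangleright f$ iff $a_{i'}\triangleright a_i\Rightarrow f'(a_{i'})\triangleright f(a_i)$, embeddings $f\mapsto emb_{j,j'}\circ f\circ proj_{i',i}$, projections $f'\mapsto proj_{j',j}\circ f'\circ emb_{i,i'}$. For targets $M,N$: $[M\to_{\mathcal F}N]=\{f:M\to N\mid I_f\in\mathcal F(I\times J)\}$ with $f\triangleright f_{i\to j}$ iff $a\triangleright a_i\Rightarrow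 f(a)\triangleright f_{i\to j}(a_i)$ for all $a\in M,a_i\in M_i$, and $I_f=\{i\to j\mid\exists f_{i\to j},f\triangleright f_{i\to j}\}$. Types: $\rho::=\iota\mid\rho\to\rho$ over base types $\iota$, one of which is $\mathsf{prop}$. Positive and negative types: $\mathrm{Type}^+\ni\rho^+::=\iota\mid\rho^-\to\rho^+$ and $\mathrm{Type}^-\ni\rho^-::=\mathsf{prop}\mid\rho^+\to\rho^-$ ($\iota$ any base type). Each type has a non-empty directed index set $I_\rho$, with $I_{\mathsf{prop}}=\{\mathsf{prop}\}$ and $I_{\rho\to\sigma}=I_\rho\times I_\sigma$. An interpretation of types assigns to each type $\rho$ a factor system $(\llbracket\rho\rrbracket_i)_{i\in I_\rho}$ and a limit $\llbracket\rho\rrbracket$ of it (with relation $a\triangleright a_i$), such that: for each base type $\iota$ the factor system is direct; $\mathsf{prop}$ is interpreted by the one-index factor system with state $\{true,false\}$ (relations are equality) and limit $\{true,false\}$ (with $b\triangleright b'\iff b=b'$); $\rho\to\sigma$ is interpreted by the function-space factor system $[(\llbracket\rho\rrbracket_i)_{i}\to(\llbracket\sigma\rrbracket_j)_{j}]$ with limit $[\llbracket\rho\rrbracket\to_{\mathcal F}\llbracket\sigma\rrbracket]$. *)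

Set Implicit Arguments.

Record dpo := {
  car :> Type;
  le : car -> car -> Prop;
  le_refl : forall x, le x x;
  le_trans : forall x y z, le x y -> le y z -> le x z;
  dpo_ne : inhabited car;
  dpo_dir : forall x y, exists z, le x z /\ le y z }.

Arguments le {d} _ _.

Definition prod_le (I J : dpo) (p q : I * J) : Prop :=
  le (fst p) (fst q) /\ le (snd p) (snd q).

Definition prodD (I J : dpo) : dpo.
Proof.
  refine {| car := (car I * car J)%type; le := @prod_le I J |}.
  - intros [x y]; split; apply le_refl.
  - intros [x1 y1] [x2 y2] [x3 y3] [h1 h2] [h3 h4]; split; simpl in *;
      eapply le_trans; eauto.
  - destruct (dpo_ne I) as [x]; destruct (dpo_ne J) as [y]; exact (inhabits (x, y)).
  - intros [x1 y1] [x2 y2]. destruct (dpo_dir I x1 x2) as [x [? ?]].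
    destruct (dpo_dir J y1 y2) as [y [? ?]]. exists (x, y); split; split; auto.
Defined.

Definition unitD : dpo.
Proof.
  refine {| car := unit; le := fun _ _ => True |}; auto.
  - exact (inhabits tt).
  - intros; exists tt; auto.
Defined.

Definition cofinal (D : dpo) (S : D -> Prop) : Prop :=
  forall i, exists j, le i j /\ S j.
Definition upset (D : dpo) (S : D -> Prop) : Prop :=
  forall i j, S i -> le i j -> S j.

Record filters := {
  Fam : forall D : dpo, (D -> Prop) -> Prop;
  Fam_cofinal : forall (D : dpo) (S : D -> Prop), Fam D S -> @cofinal D S;
  Fam_super : forall (D : dpo) (S T : D -> Prop), Fam D S -> (forall i, S i -> T i) -> Fam D T;
  Fam_inter : forall (D : dpo) (S T : D -> Prop), Fam D S -> Fam D T -> Fam D (fun i => S i /\ T i);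
  Fam_upset : forall (D : dpo) (S : D -> Prop), (exists i, S i) -> @upset D S -> Fam D S;
  Fam_D : forall (I J : dpo) (H : prodD I J -> Prop) (I' : I -> Prop),
      Fam (prodD I J) H -> Fam I I' ->
      Fam J (fun j => exists i, I' i /\ H (i, j)) }.

(** The set of states M_i is the subset
    of [st i] cut out by [ok] (this lets function spaces be represented as
    raw functions satisfying ≈-preservation).  [rel i i' a' a] is a' ▷ a
    with a' in M_{i'}, a in M_i; [emb]/[proj] are only given for i <= i'. *)
Record sys (D : dpo) := {
  st : D -> Type;
  ok : forall i, st i -> Prop;
  rel : forall i i', st i' -> st i -> Prop;
  emb : forall i i', le i i' -> st i -> st i';
  proj : forall i i', le i i' -> st i' -> st i }.

Arguments st {D} s i : rename.
Arguments ok {D} s {i} _ : rename.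
Arguments rel {D} s {i i'} _ _ : rename.
Arguments emb {D} s {i i'} _ _ : rename.
Arguments proj {D} s {i i'} _ _ : rename.

Definition approx (D : dpo) (M : sys D) (i j : D) (a : st M i) (b : st M j) : Prop :=
  exists (k : D) (c : st M k), ok M c /\ le i k /\ le j k /\ rel M c a /\ rel M c b.
Arguments approx {D M i j} _ _.

Definition is_system (D : dpo) (M : sys D) : Prop :=
  (forall (i i' : D) (a' : st M i') (a : st M i), ok M a' -> ok M a ->
      rel M a' a -> le i i') /\
  (forall (i : D) (a : st M i), ok M a -> rel M a a).

Definition is_prefactor (D : dpo) (M : sys D) : Prop :=
  is_system M /\
  forall (i i' : D), le i i' -> forall (a' : st M i') (a : st M i),
      ok M a' -> ok M a -> (approx a' a <-> rel M a' a).

Definition is_factor (D : dpo) (M : sys D) : Prop :=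
  is_prefactor M /\
  (forall (i i' : D) (h : le i i') (a : st M i), ok M a -> ok M (emb M h a)) /\
  (forall (i i' : D) (h : le i i') (a : st M i'), ok M a -> ok M (proj M h a)) /\
  (forall (i i' : D) (h : le i i') (a b : st M i), ok M a -> ok M b ->
      approx a b -> approx (emb M h a) (emb M h b)) /\
  (forall (i i' : D) (h : le i i') (a b : st M i'), ok M a -> ok M b ->
      approx a b -> approx (proj M h a) (proj M h b)) /\
  (forall (i : D) (h : le i i) (a : st M i), ok M a -> approx (emb M h a) a) /\
  (forall (i : D) (h : le i i) (a : st M i), ok M a -> approx (proj M h a) a) /\
  (forall (i i' i'' : D) (h1 : le i i') (h2 : le i' i'') (h3 : le i i'')
      (a : st M i), ok M a -> approx (emb M h2 (emb M h1 a)) (emb M h3 a)) /\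
  (forall (i i' i'' : D) (h1 : le i i') (h2 : le i' i'') (h3 : le i i'')
      (a : st M i''), ok M a -> approx (proj M h1 (proj M h2 a)) (proj M h3 a)) /\
  (forall (i i' : D) (h : le i i') (a : st M i), ok M a ->
      approx (proj M h (emb M h a)) a) /\
  (forall (i i' i'' : D) (h1 : le i i') (h2 : le i' i'')
      (a' : st M i') (a : st M i), ok M a' -> ok M a ->
      rel M a' a -> rel M (emb M h2 a') a) /\
  (forall (i i' i'' : D) (h1 : le i i') (h2 : le i' i'')
      (a'' : st M i'') (a : st M i), ok M a'' -> ok M a ->
      rel M a'' a -> rel M (proj M h2 a'') a).

Definition is_direct (D : dpo) (M : sys D) : Prop :=
  forall (i i' : D) (h : le i i') (a' : st M i') (a : st M i),
    ok M a' -> ok M a -> (rel M a' a <-> approx a' (emb M h a)).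

Definition is_inverse (D : dpo) (M : sys D) : Prop :=
  forall (i i' : D) (h : le i i') (a' : st M i') (a : st M i),
    ok M a' -> ok M a -> (rel M a' a <-> approx (proj M h a') a).

Definition is_target (FF : filters) (D : dpo) (M : sys D) (T : Type)
    (tr : T -> forall i : D, st M i -> Prop) : Prop :=
  (forall a : T, Fam FF D (fun i => exists ai : st M i, ok M ai /\ tr a i ai)) /\
  (forall (a : T) (i i' : D) (ai' : st M i') (ai : st M i),
      ok M ai' -> ok M ai -> le i i' -> tr a i' ai' -> tr a i ai -> rel M ai' ai).

Definition is_limit (FF : filters) (D : dpo) (M : sys D) (T : Type)
    (tr : T -> forall i : D, st M i -> Prop) : Prop :=
  is_target FF M tr /\
  forall (N : Type) (trN : N -> forall i : D, st M i -> Prop),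
    is_target FF M trN ->
    exists Phi : N -> T,
      (forall b i (ai : st M i), ok M ai -> trN b i ai -> tr (Phi b) i ai) /\
      (forall Psi : N -> T,
         (forall b i (ai : st M i), ok M ai -> trN b i ai -> tr (Psi b) i ai) ->
         forall b, Psi b = Phi b).

Definition funsys (I J : dpo) (M : sys I) (N : sys J) : sys (prodD I J) :=
  {| st := fun p : prodD I J => st M (fst p) -> st N (snd p);
     ok := fun p f =>
       (forall a, ok M a -> ok N (f a)) /\
       (forall a b : st M (fst p), ok M a -> ok M b -> approx a b -> approx (f a) (f b));
     rel := fun p p' f' f =>
       @prod_le I J p p' /\
       (forall (a' : st M (fst p')) (a : st M (fst p)), ok M a' -> ok M a ->
          rel M a' a -> rel N (f' a') (f a));
     emb := fun p p' h f a' => emb N (proj2 h) (f (proj M (proj1 h) a'));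
     proj := fun p p' h f' a => proj N (proj2 h) (f' (emb M (proj1 h) a)) |}.

Definition frel (I J : dpo) (M : sys I) (N : sys J) (TM TN : Type)
    (trM : TM -> forall i, st M i -> Prop) (trN : TN -> forall j, st N j -> Prop)
    (f : TM -> TN) (p : prodD I J) (g : st (funsys M N) p) : Prop :=
  forall (a : TM) (ai : st M (fst p)), ok M ai -> trM a (fst p) ai ->
    trN (f a) (snd p) (g ai).
Arguments frel {I J M N TM TN} trM trN f p g.

Definition funlim (FF : filters) (I J : dpo) (M : sys I) (N : sys J) (TM TN : Type)
    (trM : TM -> forall i, st M i -> Prop) (trN : TN -> forall j, st N j -> Prop) : Type :=
  { f : TM -> TN | Fam FF (prodD I J)
      (fun p => exists g : st (funsys M N) p, ok (funsys M N) g /\ frel trM trN f p g) }.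

Definition propsys : sys unitD :=
  {| st := fun _ => bool; ok := fun _ _ => True;
     rel := fun _ _ b b' => b = b';
     emb := fun _ _ _ b => b; proj := fun _ _ _ b => b |}.

Inductive ty (B : Type) : Type :=
| TProp : ty B
| TBase : B -> ty B
| TArr : ty B -> ty B -> ty B.
Arguments TProp {B}.
Arguments TBase {B} _.

Inductive positive {B : Type} : ty B -> Prop :=
| pos_prop : positive TProp
| pos_base : forall b, positive (TBase b)
| pos_arr : forall r s, negative r -> positive s -> positive (TArr r s)
with negative {B : Type} : ty B -> Prop :=
| neg_prop : negative TProp
| neg_arr : forall r s, positive r -> negative s -> negative (TArr r s).

Record basedata (B : Type) := {
  bidx : B -> dpo;
  bsys : forall b, sys (bidx b);
  blim : B -> Type;
  brel : forall b, blim b -> forall i, st (bsys b) i -> Prop }.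

Section Interp.
Variables (B : Type) (FF : filters) (bd : basedata B).

Fixpoint idx (r : ty B) : dpo :=
  match r with
  | TProp => unitD
  | TBase b => bidx bd b
  | TArr r s => prodD (idx r) (idx s)
  end.

Fixpoint isys (r : ty B) : sys (idx r) :=
  match r return sys (idx r) with
  | TProp => propsys
  | TBase b => bsys bd b
  | TArr r s => funsys (isys r) (isys s)
  end.

Fixpoint ilimd (r : ty B) : { T : Type & T -> forall i, st (isys r) i -> Prop } :=
  match r return { T : Type & T -> forall i, st (isys r) i -> Prop } with
  | TProp => existT (fun T : Type => T -> forall i, st (isys TProp) i -> Prop)
                (bool : Type) (fun (b : bool) _ (b' : bool) => b = b')
  | TBase b => existT (fun T : Type => T -> forall i, st (isys (TBase b)) i -> Prop)
                (blim bd b) (brel bd b)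
  | TArr r s =>
      existT (fun T : Type => T -> forall i, st (isys (TArr r s)) i -> Prop) (@funlim FF _ _ (isys r) (isys s) (projT1 (ilimd r)) (projT1 (ilimd s))
                  (projT2 (ilimd r)) (projT2 (ilimd s)))
        (fun F p g => frel (projT2 (ilimd r)) (projT2 (ilimd s)) (proj1_sig F) p g)
  end.

Definition ilim (r : ty B) : Type := projT1 (ilimd r).
Definition ilrel (r : ty B) : ilim r -> forall i, st (isys r) i -> Prop :=
  projT2 (ilimd r).

Definition is_interp : Prop :=
  (forall b : B, is_factor (bsys bd b) /\ is_direct (bsys bd b)) /\
  (forall r : ty B, is_factor (isys r) /\ is_limit FF (isys r) (ilrel r)).
End Interp.

From Stdlib Require Import Setoid.

(* Directness and inverseness go together by induction on types: in a function
   space, f' ▷ f compares f' with emb ∘ f ∘ proj, and the comparison can be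
   moved from arguments to values when the domain is inverse and the
   codomain direct (or the domain direct and the codomain inverse, for
   proj ∘ f' ∘ emb).  For the limit, a ▷ emb a_i (resp. a ▷ proj a_i') holds
   because a limit is a maximal target on its own carrier: adjoining the new
   state to those related to a is again a target, directness (resp.
   inverseness) being exactly what makes the new state coherent with the old
   ones. *)
Set Implicit Arguments.
Unset Strict Implicit.

Section Prefactor.
Variables (D : dpo) (M : sys D).
Hypothesis HP : is_prefactor M.

Lemma sys_rel_refl k (x : st M k) : ok M x -> rel M x x.
Proof. apply (proj2 (proj1 HP)). Qed.

Lemma approx_iff_rel k (x y : st M k) : ok M x -> ok M y -> (approx x y <-> rel M x y).
Proof. apply (proj2 HP k k (le_refl D k)). Qed.

Lemma approx_sym i j (x : st M i) (y : st M j) : approx x y -> approx y x.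
Proof. intros (k & c & oc & hi & hj & cx & cy). exists k, c; auto. Qed.

Lemma approx_trans k (x y z : st M k) : ok M x -> ok M y -> ok M z ->
  approx x y -> approx y z -> approx x z.
Proof.
  intros ox oy oz xy yz.
  apply approx_sym, approx_iff_rel in xy; auto.
  apply approx_iff_rel in yz; auto.
  exists k, y; repeat split; auto; apply le_refl.
Qed.
End Prefactor.

Lemma factor_prefactor (D : dpo) (M : sys D) : is_factor M -> is_prefactor M.
Proof. intros []; assumption. Qed.

#[export] Hint Resolve factor_prefactor : core.

Section Factor.
Variables (D : dpo) (M : sys D).
Hypothesis HM : is_factor M.

Lemma emb_ok i i' (h : le i i') (a : st M i) : ok M a -> ok M (emb M h a).
Proof. apply (proj1 (proj2 HM)). Qed.

Lemma proj_ok i i' (h : le i i') (a : st M i') : ok M a -> ok M (proj M h a).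
Proof. apply (proj1 (proj2 (proj2 HM))). Qed.

#[local] Hint Resolve emb_ok proj_ok : core.

Lemma emb_approx i i' (h : le i i') (a b : st M i) : ok M a -> ok M b ->
  approx a b -> approx (emb M h a) (emb M h b).
Proof. apply HM. Qed.

Lemma proj_approx i i' (h : le i i') (a b : st M i') : ok M a -> ok M b ->
  approx a b -> approx (proj M h a) (proj M h b).
Proof. apply HM. Qed.

Lemma emb_emb i i' i'' (h1 : le i i') (h2 : le i' i'') (h3 : le i i'') (a : st M i) :
  ok M a -> approx (emb M h2 (emb M h1 a)) (emb M h3 a).
Proof. apply HM. Qed.

Lemma proj_proj i i' i'' (h1 : le i i') (h2 : le i' i'') (h3 : le i i'') (a : st M i'') :
  ok M a -> approx (proj M h1 (proj M h2 a)) (proj M h3 a).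
Proof. apply HM. Qed.

Lemma proj_emb i i' (h : le i i') (a : st M i) : ok M a -> approx (proj M h (emb M h a)) a.
Proof. apply HM. Qed.

Lemma emb_approx_cancel i i' (h : le i i') (a b : st M i) : ok M a -> ok M b ->
  approx (emb M h a) (emb M h b) -> approx a b.
Proof.
  intros oa ob ab.
  apply approx_trans with (y := proj M h (emb M h a)); auto.
  - apply approx_sym, proj_emb; assumption.
  - apply approx_trans with (y := proj M h (emb M h b)); auto using proj_approx, proj_emb.
Qed.

Lemma direct_common_rel (HD : is_direct M) i j k (hi : le i k) (hj : le j k)
    (c : st M k) (x : st M i) (y : st M j) :
  ok M c -> ok M x -> ok M y -> rel M c x -> rel M c y ->
  approx (emb M hi x) (emb M hj y).
Proof.
  intros oc ox oy cx cy.
  apply (HD _ _ hi) in cx; apply (HD _ _ hj) in cy; auto.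
  apply approx_trans with (y := c); auto using approx_sym.
Qed.

Lemma inverse_common_rel (HI : is_inverse M) i j k l (hi : le i k) (hj : le j k)
    (hli : le l i) (hlj : le l j) (c : st M k) (x : st M i) (y : st M j) :
  ok M c -> ok M x -> ok M y -> rel M c x -> rel M c y ->
  approx (proj M hli x) (proj M hlj y).
Proof.
  intros oc ox oy cx cy.
  apply (HI _ _ hi), (proj_approx hli) in cx; auto.
  apply (HI _ _ hj), (proj_approx hlj) in cy; auto.
  pose (hlk := le_trans _ _ _ _ hli hi).
  apply approx_trans with (y := proj M hli (proj M hi c)); auto using approx_sym.
  apply approx_trans with (y := proj M hlk c); auto using proj_proj.
  apply approx_trans with (y := proj M hlj (proj M hj c)); auto using approx_sym, proj_proj.
Qed.
End Factor.

#[export] Hint Resolve emb_ok proj_ok : core.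

Section Limit.
Variables (D : dpo) (M : sys D) (FF : filters) (T : Type)
  (tr : T -> forall i : D, st M i -> Prop).
Arguments tr : clear implicits.
Hypothesis HL : is_limit FF M tr.

(* The mediating map from [trN] also mediates from [tr], since [tr] is
   contained in [trN]; by uniqueness it is therefore the identity. *)
Lemma limit_maximal (trN : T -> forall i : D, st M i -> Prop) :
  is_target FF M trN -> (forall a j b, tr a j b -> trN a j b) ->
  forall a j b, ok M b -> trN a j b -> tr a j b.
Proof.
  intros HN sub a j b ob Hb.
  destruct HL as [HT univ].
  destruct (univ T trN HN) as (Phi & HPhi & _).
  destruct (univ T tr HT) as (Id & _ & Id_unique).
  assert (E : Phi a = a).
  { rewrite (Id_unique Phi), (Id_unique (fun x => x)); auto. }
  rewrite <- E. auto.
Qed.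

Lemma limit_cofinal a k : exists k', le k k' /\ exists c, ok M c /\ tr a k' c.
Proof.
  destruct HL as [[HFam _] _].
  destruct (Fam_cofinal _ _ _ (HFam a) k) as (k' & hk & c & Hc). eauto.
Qed.

Lemma limit_coherent a i i' (hi : le i i') (ai' : st M i') (ai : st M i) :
  ok M ai' -> ok M ai -> tr a i' ai' -> tr a i ai -> rel M ai' ai.
Proof. intros; eapply (proj2 (proj1 HL)); eauto. Qed.

Hypothesis HM : is_factor M.

Lemma limit_adjoin a k (x : st M k) : ok M x ->
  (forall j (b : st M j), ok M b -> le j k -> tr a j b -> rel M x b) ->
  (forall j (b : st M j), ok M b -> le k j -> tr a j b -> rel M b x) ->
  tr a k x.
Proof.
  intros ox below above.
  (* States at [k] and at [j] have different types, so [x] is transported along [k = j]. *)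
  pose (trx := fun y j b => tr y j b \/ (y = a /\ exists E : k = j, b = eq_rect k (st M) x j E)).
  apply (limit_maximal (trN := trx)); [ | left; assumption | assumption | ].
  2: { right; split; [reflexivity | exists eq_refl; reflexivity]. }
  destruct HL as [[HFam Hcoh] _]. split.
  - intro y. eapply Fam_super; [apply (HFam y) |].
    intros j (b & ob & Hb). exists b; split; [assumption | left; assumption].
  - intros y j j' b' b ob' ob hjj' Hb' Hb.
    destruct Hb' as [Hb' | [Ey' [E' Hb']]], Hb as [Hb | [Ey [E Hb]]]; try subst y.
    + eauto.
    + destruct E; simpl in Hb; subst b; auto.
    + destruct E'; simpl in Hb'; subst b'; auto.
    + destruct E, E'; simpl in *; subst; auto using sys_rel_refl.
Qed.

Lemma direct_limit_emb (HD : is_direct M) a i i' (h : le i i') (ai : st M i) :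
  ok M ai -> tr a i ai -> tr a i' (emb M h ai).
Proof.
  intros oai Hai. apply limit_adjoin; auto.
  - intros j b ob hj Hb. apply (HD _ _ hj); auto.
    destruct (limit_cofinal a i') as (k & hk & c & oc & Hc).
    pose (hik := le_trans _ _ _ _ h hk); pose (hjk := le_trans _ _ _ _ hj hk).
    assert (common : approx (emb M hik ai) (emb M hjk b)).
    { apply (direct_common_rel HM HD) with (c := c); auto;
        eapply limit_coherent; eauto. }
    apply (emb_approx_cancel HM (h := hk)); auto.
    apply approx_trans with (y := emb M hik ai); auto using emb_emb.
    apply approx_trans with (y := emb M hjk b); auto using approx_sym, emb_emb.
  - intros j b ob hj Hb. pose (hij := le_trans _ _ _ _ h hj).
    assert (b_ai : rel M b ai) by (eapply limit_coherent; eauto).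
    apply (HD _ _ hij) in b_ai; auto.
    apply (HD _ _ hj); auto.
    apply approx_trans with (y := emb M hij ai); auto using approx_sym, emb_emb.
Qed.

Lemma inverse_limit_proj (HI : is_inverse M) a i i' (h : le i i') (ai' : st M i') :
  ok M ai' -> tr a i' ai' -> tr a i (proj M h ai').
Proof.
  intros oai' Hai'. apply limit_adjoin; auto.
  - intros j b ob hj Hb. pose (hji' := le_trans _ _ _ _ hj h).
    assert (ai'_b : rel M ai' b) by (eapply limit_coherent; eauto).
    apply (HI _ _ hji') in ai'_b; auto.
    apply (HI _ _ hj); auto.
    apply approx_trans with (y := proj M hji' ai'); auto using proj_proj.
  - intros j b ob hj Hb. apply (HI _ _ hj); auto.
    destruct (dpo_dir D j i') as (z & hjz & hi'z).
    destruct (limit_cofinal a z) as (k & hzk & c & oc & Hc).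
    pose (hjk := le_trans _ _ _ _ hjz hzk); pose (hi'k := le_trans _ _ _ _ hi'z hzk).
    apply (inverse_common_rel HM HI hjk hi'k) with (c := c); auto;
      eapply limit_coherent; eauto.
Qed.
End Limit.

Section FunctionSpace.
Variables (I J : dpo) (M : sys I) (N : sys J).
Hypotheses (HM : is_factor M) (HN : is_factor N) (HMN : is_factor (funsys M N)).

Lemma funsys_direct : is_inverse M -> is_direct N -> is_direct (funsys M N).
Proof.
  intros HIM HDN p p' h f' f [okf' apf'] [okf apf].
  assert (ok_fe : ok (funsys M N) (emb (funsys M N) h f)) by (apply emb_ok; auto; split; auto).
  rewrite (approx_iff_rel (factor_prefactor HMN)); [ | split; auto | exact ok_fe].
  split; intros [_ Hf]; split; simpl.
  - apply (le_refl (prodD I J)).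
  - intros a'' a' oa'' oa' a''_a'.
    assert (a''_pa' : rel M a'' (proj M (proj1 h) a')).
    { apply (HIM _ _ (proj1 h)); auto.
      apply proj_approx, approx_iff_rel; auto. }
    apply (approx_iff_rel (factor_prefactor HN)); auto.
    apply (HDN _ _ (proj2 h)); auto.
  - exact h.
  - intros a' a oa' oa a'_a.
    assert (fe : approx (f' a') (emb N (proj2 h) (f (proj M (proj1 h) a')))).
    { apply (approx_iff_rel (factor_prefactor HN)); auto.
      apply Hf; auto using sys_rel_refl. }
    apply (HDN _ _ (proj2 h)); auto.
    apply approx_trans with (y := emb N (proj2 h) (f (proj M (proj1 h) a'))); auto.
    apply emb_approx, apf, (HIM _ _ (proj1 h)); auto.
Qed.

Lemma funsys_inverse : is_direct M -> is_inverse N -> is_inverse (funsys M N).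
Proof.
  intros HDM HIN p p' h f' f [okf' apf'] [okf apf].
  assert (ok_pf : ok (funsys M N) (proj (funsys M N) h f')) by (apply proj_ok; auto; split; auto).
  rewrite (approx_iff_rel (factor_prefactor HMN)); [ | exact ok_pf | split; auto].
  split; intros [_ Hf]; split; simpl.
  - apply (le_refl (prodD I J)).
  - intros a1 a oa1 oa a1_a.
    assert (ea1_a : rel M (emb M (proj1 h) a1) a).
    { apply (HDM _ _ (proj1 h)); auto.
      apply emb_approx, approx_iff_rel; auto. }
    apply (approx_iff_rel (factor_prefactor HN)); auto.
    apply (HIN _ _ (proj2 h)); auto.
  - exact h.
  - intros a' a oa' oa a'_a.
    assert (pf : approx (proj N (proj2 h) (f' (emb M (proj1 h) a))) (f a)).
    { apply (approx_iff_rel (factor_prefactor HN)); auto.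
      apply Hf; auto using sys_rel_refl. }
    apply (HIN _ _ (proj2 h)); auto.
    apply approx_trans with (y := proj N (proj2 h) (f' (emb M (proj1 h) a))); auto.
    apply proj_approx, apf', (HDM _ _ (proj1 h)); auto.
Qed.
End FunctionSpace.

Lemma propsys_approx (i j : unitD) (b : st propsys i) (b' : st propsys j) :
  approx b b' <-> b = b'.
Proof.
  split.
  - intros (k & c & _ & _ & _ & cb & cb'). simpl in *. congruence.
  - intros <-. exists tt, b. simpl. auto.
Qed.

Lemma propsys_direct : is_direct propsys.
Proof. intros i i' h b' b _ _. rewrite propsys_approx. reflexivity. Qed.

Lemma propsys_inverse : is_inverse propsys.
Proof. intros i i' h b' b _ _. rewrite propsys_approx. reflexivity. Qed.

Lemma interp_direct_inverse (B : Type) (FF : filters) (bd : basedata B) :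
  is_interp FF bd -> forall r : ty B,
  (positive r -> is_direct (isys bd r)) /\ (negative r -> is_inverse (isys bd r)).
Proof.
  intros [Hbase Hty] r.
  assert (factor : forall r, is_factor (isys bd r)) by (intro; apply Hty).
  induction r as [| b | r [IHr_pos IHr_neg] s [IHs_pos IHs_neg]];
    split; intro Hsign; inversion Hsign; subst.
  - exact propsys_direct.
  - exact propsys_inverse.
  - apply Hbase.
  - apply (funsys_direct (factor r) (factor s) (factor (TArr r s))); auto.
  - apply (funsys_inverse (factor r) (factor s) (factor (TArr r s))); auto.
Qed.

Theorem lemma3p5 (B : Type) (FF : filters) (bd : basedata B)
  (Hinterp : is_interp FF bd) (r : ty B) (i i' : idx bd r) (h : le i i') :
  (positive r ->
     is_direct (isys bd r) /\
     forall (a : ilim FF bd r) (ai : st (isys bd r) i),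
       ok (isys bd r) ai -> ilrel FF bd r a i ai ->
       ilrel FF bd r a i' (emb (isys bd r) h ai)) /\
  (negative r ->
     is_inverse (isys bd r) /\
     forall (a : ilim FF bd r) (ai' : st (isys bd r) i'),
       ok (isys bd r) ai' -> ilrel FF bd r a i' ai' ->
       ilrel FF bd r a i (proj (isys bd r) h ai')).
Proof.
  destruct (proj2 Hinterp r) as [Hfactor Hlimit].
  destruct (interp_direct_inverse Hinterp r) as [Hdirect Hinverse].
  split; intro Hsign; split; auto; intros.
  - apply (direct_limit_emb Hlimit); auto.
  - apply (inverse_limit_proj Hlimit); auto.
Qed.
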